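(* Assume $V=L$. Let $i\in T$ and $X\in\mathrm{IPS}_{[\subseteq i]}$. Then every nonempty set $Y\subseteq X$ which is clopen in $X$ (in the relative topology) belongs to $\mathrm{IPS}_{[\subseteq i]}$.
   Context: $T$ is the set of all nonempty finite sequences of countable ordinals, ordered by strict extension $\subset$; $[\subseteq i]=\{j\in T: j\subseteq i\}$. $\Xi$ is the set of all at most countable $\xi\subseteq T$ closed downward under $\subset$ (so $[\subseteq i]\in\Xi$). $D=2^\omega$; $D^\xi$ is the product of $\xi$ copies of $D$. For $\eta\subseteq\xi$ and $x\in D^\xi$, $x\restriction\eta$ is the restriction. For $\zeta\in\Xi$, $\mathrm{IPS}_\zeta$ is the set of all $X\subseteq D^\zeta$ for which there is a homeomorphism $H:D^\zeta\to X$ onto $X$ such that for all $x_0,x_1\in D^\zeta$ and all $\xi\in\Xi$, $\xi\subseteq\zeta$: $x_0\restriction\xi=x_1\restriction\xi\iff H(x_0)\restriction\xi=H(x_1)\restriction\xi$. *)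

From HB Require Import structures.
From mathcomp Require Import all_boot all_order all_algebra.
From mathcomp Require Import all_classical all_reals all_analysis.
Set Implicit Arguments. Unset Strict Implicit. Unset Printing Implicit Defensive.
Local Open Scope classical_set_scope.

Section Defs.
(* Omega plays the role of omega_1 (the countable ordinals); only the
   sequence structure over it matters, so we allow any type. *)
Variable Omega : Type.

Definition Tseq := {s : seq Omega | s <> [::]}.

Definition tsub_eq (j i : Tseq) : Prop := exists k, sval i = sval j ++ k.
Definition tsub (j i : Tseq) : Prop :=
  exists k, k <> [::] /\ sval i = sval j ++ k.

Definition below (i : Tseq) : set Tseq := [set j | tsub_eq j i].

Definition Xi : set (set Tseq) :=
  [set xi | countable xi /\ (forall i j, tsub j i -> xi i -> xi j)].

Definition D := cantor_space.
Definition Dpow (zeta : set Tseq) := prod_topology (fun _ : {j | zeta j} => D).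

Definition agree_on (zeta xi : set Tseq) (x0 x1 : Dpow zeta) : Prop :=
  forall j (h : zeta j), xi j -> x0 (exist _ j h) = x1 (exist _ j h).

Definition homeo_onto (zeta : set Tseq) (H : Dpow zeta -> Dpow zeta)
  (X : set (Dpow zeta)) : Prop :=
  [/\ continuous H, range H = X, injective H &
      exists G : Dpow zeta -> Dpow zeta,
        {within X, continuous G} /\ (forall x, G (H x) = x)].

Definition IPS (zeta : set Tseq) : set (set (Dpow zeta)) :=
  [set X | exists H : Dpow zeta -> Dpow zeta, homeo_onto H X /\
     (forall (x0 x1 : Dpow zeta) (xi : set Tseq), Xi xi -> xi `<=` zeta ->
        (agree_on xi x0 x1 <-> agree_on xi (H x0) (H x1)))].

Definition rel_clopen {S : topologicalType} (X Y : set S) : Prop :=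
  (exists U, open U /\ Y = X `&` U) /\ (exists F, closed F /\ Y = X `&` F).

End Defs.

From HB Require Import structures.
From mathcomp Require Import all_boot all_order all_algebra.
From mathcomp Require Import all_classical all_reals all_analysis.
From mathcomp Require Import zify.
Set Implicit Arguments. Unset Strict Implicit. Unset Printing Implicit Defensive.
Local Open Scope classical_set_scope.

(* The coordinates of [D^[<= i]] form a finite chain ranked by length, and the
   members of [Xi] contained in [[<= i]] are exactly its initial segments, so it
   suffices to find a homeomorphism [K] of [D^[<= i]] onto the nonempty clopen
   set [U = H^-1(Y)] such that [K] and its inverse are triangular: coordinate
   [j] of the image depends only on the coordinates of rank at most that of
   [j]. Then [H \o K] witnesses that [Y] is in [IPS]. Being clopen in a
   compact space, [U] is determined by the first [N] bits of each coordinate.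
   [K] is built rank by rank: given the lower coordinates of the image, the set
   of [N]-bit words that the current coordinate can start with inside [U] is a
   nonempty finite set [s], and a fixed homeomorphism of [D] onto the union of
   the cylinders of [s] is applied to the current input coordinate. *)

(** * Cylinders in powers of the Cantor space *)

Lemma cvg_prod_coord (J : Type) (T : J -> topologicalType)
    (F : set_system (prod_topology T)) (x : prod_topology T) :
  Filter F -> (forall j B, nbhs (x j) B -> F [set y | B (y j)]) -> F --> x.
Proof.
move=> FF Fx; apply/cvg_sup => j A /= [_ [[B oB <-] Bxj BA]].
by apply: filterS BA _; apply: Fx; exact: open_nbhs_nbhs.
Qed.

Lemma continuous_prod_coord (J : Type) (T S : topologicalType)
    (g : S -> prod_topology (fun _ : J => T)) :
  (forall j, continuous (fun s => g s j)) -> continuous g.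
Proof.
have projT j : range (fun f : prod_topology (fun _ : J => T) => f j) = setT.
  by apply/seteqP; split=> // t _; exists (fun _ => t).
move=> gc s; apply/cvg_sup => j; apply/cvg_image; first exact: projT.
move=> B /= Bg; exists ((fun f : prod_topology (fun _ : J => T) => f j) @^-1` B).
  exact: gc.
by rewrite image_preimage ?projT.
Qed.

HB.instance Definition _ (I : Type) := Pointed.on (prod_topology (fun _ : I => D)).

Section CantorPower.
Variable I : Type.
Local Notation DP := (prod_topology (fun _ : I => D)).

Definition agree_upto (M : nat) (x y : DP) :=
  forall j k, (k < M)%N -> x j k = y j k.

Lemma agree_upto_trans M x y z :
  agree_upto M x y -> agree_upto M y z -> agree_upto M x z.
Proof. by move=> xy yz j k kM; rewrite xy ?yz. Qed.

Lemma agree_upto_le M M' x y :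
  (M' <= M)%N -> agree_upto M x y -> agree_upto M' x y.
Proof. by move=> M'M xy j k kM'; apply: xy; lia. Qed.

Lemma nbhs_prefix (z : D) (B : set D) :
  nbhs z B -> exists M, [set w : D | forall k, (k < M)%N -> w k = z k] `<=` B.
Proof.
pose cyl M := [set w : D | forall k, (k < M)%N -> w k = z k].
have Fcyl : Filter (filter_from setT cyl).
  apply: filter_from_filter; first by exists 0%N.
  by move=> a b _ _; exists (maxn a b) => // w wab; split=> k kab; apply: wab; lia.
suff /[apply] -[M _ ?] : filter_from setT cyl --> z by exists M.
apply: cvg_prod_coord => k C zkC; exists k.+1 => // w wz /=.
by rewrite wz //; exact: nbhs_singleton.
Qed.

Lemma nbhs_agree_upto (x : DP) (B : set DP) :
  nbhs x B -> exists M, [set y | agree_upto M x y] `<=` B.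
Proof.
pose cyl M := [set y | agree_upto M x y].
have Fcyl : Filter (filter_from setT cyl).
  apply: filter_from_filter; first by exists 0%N.
  move=> a b _ _; exists (maxn a b) => // y xy.
  by split; apply: agree_upto_le xy; lia.
suff /[apply] -[M _ ?] : filter_from setT cyl --> x by exists M.
apply: cvg_prod_coord => j C /nbhs_prefix[M MC]; exists M => // y xy.
by apply: MC => k kM; rewrite xy.
Qed.

Lemma nbhs_bit (x : DP) j k : nbhs x [set y : DP | y j k = x j k].
Proof.
have bitc : continuous (fun y : DP => y j k).
  move=> y; apply: (@continuous_comp _ _ _ (fun y : DP => y j) (fun z : D => z k)).
    exact: (@proj_continuous {classic I} (fun _ => D) j).
  exact: (@proj_continuous nat (fun _ => bool) k).
exact: bitc x _ (discrete_set1 _).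
Qed.

Hypothesis finI : finite_set [set: I].

Lemma agree_upto_nbhs M (x : DP) : nbhs x [set y | agree_upto M x y].
Proof.
have [F FE] := (@finite_fsetP {classic I} setT).1 finI.
pose cylj j := [set y : DP | forall k : 'I_M, y j k = x j k].
have cylj_nbhs j : nbhs x (cylj j).
  exact: (@filter_forall _ _ (fun (k : 'I_M) (y : DP) => y j k = x j k) _ _
           (fun k => nbhs_bit x j k)).
apply: filterS (@filter_bigI _ {classic I} F cylj (nbhs x) _ (fun j _ => cylj_nbhs j)).
move=> y Fy j k kM; symmetry.
by apply: (Fy j _ (Ordinal kM)); rewrite -FE.
Qed.

Lemma clopen_locally_agree (U : set DP) : open U -> closed U ->
  forall x, exists N, forall y, agree_upto N x y -> (U x <-> U y).
Proof.
move=> oU cU x; have [Ux|nUx] := pselect (U x).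
  have [N NU] := nbhs_agree_upto (open_nbhs_nbhs (conj oU Ux)).
  by exists N => y /NU Uy.
have [N NU] := nbhs_agree_upto (open_nbhs_nbhs (conj (closed_openC cU) nUx)).
by exists N => y /NU nUy.
Qed.

Lemma clopen_agree_upto (U : set DP) : open U -> closed U ->
  exists N, forall x y, agree_upto N x y -> U x -> U y.
Proof.
move=> oU cU.
pose O N := [set x : DP | forall y, agree_upto N x y -> (U x <-> U y)].
have O_open N : open (O N).
  rewrite openE => x Ox; apply: filterS (agree_upto_nbhs N x) => y xy z yz.
  have := Ox z (agree_upto_trans xy yz); have := Ox y xy; tauto.
have O_cover : [set: DP] `<=` cover [set: nat] O.
  by move=> x _; have [N ?] := clopen_locally_agree oU cU x; exists N.
have DP_compact : compact [set: DP].
  have := @tychonoff {classic I} (fun _ => D) (fun _ => setT)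
    (fun _ => cantor_space_compact).
  by congr (compact _); apply/seteqP.
move: DP_compact; rewrite (@compact_cover DP).
case/(_ nat setT O (fun N _ => O_open N) O_cover) => F _ FO.
exists (\max_(N <- finmap.enum_fset F) N)%N => x y xy Ux.
have [N /= FN ON] := FO x Logic.I.
apply: (ON y _).1 => //; apply: agree_upto_le xy.
exact: (@leq_bigmax_seq nat _ xpredT id N FN).
Qed.

Lemma continuous_of_agree_upto (f : DP -> DP) :
  (forall M, exists M', forall x y, agree_upto M' x y -> agree_upto M (f x) (f y)) ->
  continuous f.
Proof.
move=> floc; apply: continuous_prod_coord => j.
apply: (@continuous_prod_coord nat bool) => k x B fxB.
have [M' fM'] := floc k.+1.
apply: filterS (agree_upto_nbhs M' x) => y xy /=.
by rewrite -(fM' x y xy j k (ltnSn k)); exact: nbhs_singleton fxB.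
Qed.

End CantorPower.

(** * Homeomorphisms of [D] onto finite unions of cylinders *)

Lemma find_eq_index (T : Type) (x0 : T) (P : pred T) (s : seq T) (i : nat) :
  (i <= size s)%N -> (forall k, (k < i)%N -> ~~ P (nth x0 s k)) ->
  ((i < size s)%N -> P (nth x0 s i)) -> find P s = i.
Proof.
elim: s i => [|a s IH] [|i] //=; first by move=> _ _ /(_ isT) ->.
move=> si before_i at_i; rewrite (negbTE (before_i 0%N isT)); congr S.
by apply: IH => // k ki; exact: (before_i k.+1).
Qed.

Section CylinderMaps.
Variable N : nat.
Local Notation word := (N.-tuple bool).

Definition init_word (x : D) : word := [tuple x i | i < N].

Definition prepend (w : word) (x : D) : D :=
  fun k => if (k < N)%N then nth false w k else x (k - N)%N.

Lemma nth_init_word x k : (k < N)%N -> nth false (init_word x) k = x k.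
Proof. by move=> kN; rewrite -(tnth_nth _ _ (Ordinal kN)) tnth_mktuple. Qed.

Lemma eq_init_word x y :
  (forall k, (k < N)%N -> x k = y k) -> init_word x = init_word y.
Proof. by move=> xy; apply: eq_from_tnth => k; rewrite !tnth_mktuple xy. Qed.

Lemma bits_of_init_word_eq x y :
  init_word x = init_word y -> forall k, (k < N)%N -> x k = y k.
Proof. by move=> xy k kN; rewrite -(nth_init_word x kN) -(nth_init_word y kN) xy. Qed.

Lemma init_word_prepend w x : init_word (prepend w x) = w.
Proof.
by apply: eq_from_tnth => k; rewrite tnth_mktuple /prepend ltn_ord (tnth_nth false).
Qed.

Variable s : seq word.

Definition lead_ones (x : D) : nat := find negb (mkseq x (size s - 1)).

Definition used_bits (a : nat) : nat := minn a.+1 (size s - 1).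

(* [cylmap] replaces the leading ones of [x] (at most [size s - 1] of them,
   together with the zero ending them, if any) by the corresponding word of [s]:
   a homeomorphism of [D] onto the union of the cylinders of the words of [s]. *)
Definition cylmap (x : D) : D :=
  let a := lead_ones x in
  prepend (nth [tuple false | _ < N] s a) (fun k => x (k + used_bits a)%N).

Definition cylmap_inv (y : D) : D :=
  let b := index (init_word y) s in
  fun k => if (k < used_bits b)%N then (k < b)%N else y (k - used_bits b + N)%N.

Lemma lead_ones_le x : (lead_ones x <= (size s - 1))%N.
Proof. by have := find_size negb (mkseq x (size s - 1)); rewrite size_mkseq. Qed.

Lemma lead_ones_lt x : (0 < size s)%N -> (lead_ones x < size s)%N.
Proof. by have := lead_ones_le x; lia. Qed.

Lemma init_word_cylmap x :
  init_word (cylmap x) = nth [tuple false | _ < N] s (lead_ones x).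
Proof. exact: init_word_prepend. Qed.

Lemma init_word_cylmap_mem x : (0 < size s)%N -> init_word (cylmap x) \in s.
Proof. by move=> s0; rewrite init_word_cylmap; exact: mem_nth (lead_ones_lt x s0). Qed.

Lemma cylmap_local x x' k :
  (forall k', (k' <= k + size s)%N -> x k' = x' k') -> cylmap x k = cylmap x' k.
Proof.
move=> xx'; have a_le := lead_ones_le x'; rewrite /cylmap /prepend.
have -> : lead_ones x = lead_ones x'.
  congr find; apply: (@eq_from_nth _ false) => [|k']; rewrite !size_mkseq // => k's.
  by rewrite !nth_mkseq // xx' //; lia.
case: ifP => // kN; apply: xx'.
by move: a_le; rewrite /used_bits; lia.
Qed.

Lemma cylmap_inv_local y y' k :
  (forall k', (k' <= k + N)%N -> y k' = y' k') -> cylmap_inv y k = cylmap_inv y' k.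
Proof.
move=> yy'; rewrite /cylmap_inv.
have -> : init_word y = init_word y' by apply: eq_init_word => k' k'N; apply: yy'; lia.
by case: ifP => // _; apply: yy'; lia.
Qed.

Hypothesis s_uniq : uniq s.

Lemma cylmapK : (0 < size s)%N -> cancel cylmap cylmap_inv.
Proof.
move=> s0 x; have := lead_ones_le x; set a := lead_ones x => a_le.
have index_a : index (init_word (cylmap x)) s = a.
  by rewrite init_word_cylmap index_uniq //; exact: lead_ones_lt.
apply: funext => k; rewrite /cylmap_inv index_a.
case: ifP => k_used; last first.
  rewrite /cylmap /prepend -/a ifF; last by lia.
  by congr x; lia.
have [ka|ak] := ltnP k a.
  have kn : (k < size s - 1)%N by exact: leq_trans ka a_le.
  by have := before_find false ka; rewrite nth_mkseq // => /negbFE ->.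
have ka : k = a by move: k_used; rewrite /used_bits; lia.
have kn : (k < size s - 1)%N by move: k_used; rewrite /used_bits; lia.
have has0 : has negb (mkseq x (size s - 1)).
  by rewrite has_find size_mkseq; rewrite ka in kn.
have := nth_find false has0; rewrite nth_mkseq; last by rewrite ka in kn.
by rewrite ka => /negbTE ->.
Qed.

Lemma lead_ones_cylmap_inv y : init_word y \in s ->
  lead_ones (cylmap_inv y) = index (init_word y) s.
Proof.
move=> ys; set b := index (init_word y) s.
have bs : (b < size s)%N by rewrite index_mem.
have used_b : used_bits b = minn b.+1 (size s - 1) by [].
apply: (@find_eq_index _ false) => [|k kb|]; rewrite ?size_mkseq; first by lia.
  by rewrite nth_mkseq /cylmap_inv -/b ?ifT ?kb //; lia.
by move=> bn; rewrite nth_mkseq // /cylmap_inv -/b ifT ?ltnn //; lia.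
Qed.

Lemma cylmap_invK y : init_word y \in s -> cylmap (cylmap_inv y) = y.
Proof.
move=> ys; have := lead_ones_cylmap_inv ys; set b := index (init_word y) s => lead_b.
have bs : (b < size s)%N by rewrite index_mem.
have used_b : used_bits b = minn b.+1 (size s - 1) by [].
apply: funext => k; rewrite /cylmap lead_b nth_index // /prepend.
case: ifP => kN; first by rewrite nth_init_word.
by rewrite /cylmap_inv -/b ifF; [congr y | ]; lia.
Qed.

End CylinderMaps.

(** * Triangular homeomorphisms onto clopen sets *)

Section RankedCoordinates.
Variables (I : Type) (r : I -> nat) (n : nat).
Hypothesis r_inj : injective r.
Hypothesis r_lt : forall j, (r j < n)%N.
Local Notation DP := (prod_topology (fun _ : I => D)).

Lemma finite_ranked : finite_set [set: I].
Proof.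
have -> : [set: I] = r @^-1` `I_n by apply/seteqP; split=> // j _; exact: r_lt.
by apply: finite_preimage => // j j' _ _; exact: r_inj.
Qed.

Definition rank_triangular (f : DP -> DP) :=
  forall x x' j, (forall j', (r j' <= r j)%N -> x j' = x' j') -> f x j = f x' j.

Section Embedding.
Variables (N : nat) (U : set DP).
Hypothesis U_depth : forall x y, agree_upto N x y -> U x -> U y.
Hypothesis U_neq0 : U !=set0.
Local Notation word := (N.-tuple bool).

Definition agree_below (m : nat) (z y : DP) :=
  forall j, (r j < m)%N -> forall k, (k < N)%N -> z j k = y j k.

Definition fiber_words j (y : DP) : seq word :=
  [seq w <- enum {: word} |
    `[< exists z, [/\ U z, agree_below (r j) z y & init_word N (z j) = w] >]].

Lemma fiber_wordsP j y w :
  reflect (exists z, [/\ U z, agree_below (r j) z y & init_word N (z j) = w])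
          (w \in fiber_words j y).
Proof. by rewrite mem_filter mem_enum andbT; exact: asboolP. Qed.

Lemma fiber_words_uniq j y : uniq (fiber_words j y).
Proof. exact/filter_uniq/enum_uniq. Qed.

Lemma size_fiber_words j y : (size (fiber_words j y) <= #|{: word}|)%N.
Proof. by rewrite size_filter cardE; exact: count_size. Qed.

Lemma fiber_words_agree j y y' :
  agree_below (r j) y y' -> fiber_words j y = fiber_words j y'.
Proof.
move=> yy'; apply: eq_filter => w; apply: asbool_equiv_eq.
by split=> -[z [Uz zy <-]]; exists z; split=> // j' j'j k kN; rewrite zy ?yy'.
Qed.

Definition embed_step (x y : DP) : DP := fun j => cylmap (fiber_words j y) (x j).

Definition embed (x : DP) : DP := iter n (embed_step x) x.

Definition embed_inv (y : DP) : DP := fun j => cylmap_inv (fiber_words j y) (y j).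

Lemma iter_embed_step_rank x k y y' j :
  (r j < k)%N -> iter k (embed_step x) y j = iter k (embed_step x) y' j.
Proof.
elim: k y y' j => [//|k IHk] y y' j jk; rewrite !iterS /embed_step.
by congr cylmap; apply: fiber_words_agree => j' j'j b bN; rewrite (IHk y y') //; lia.
Qed.

Lemma embed_fix x : embed x = embed_step x (embed x).
Proof.
by apply: funext => j; rewrite /embed -iterS iterSr; exact: iter_embed_step_rank.
Qed.

Lemma embedE x j : embed x j = cylmap (fiber_words j (embed x)) (x j).
Proof. by rewrite {1}embed_fix. Qed.

Lemma embed_step_fix_triangular x x' y y' :
  y = embed_step x y -> y' = embed_step x' y' ->
  forall j, (forall j', (r j' <= r j)%N -> x j' = x' j') -> y j = y' j.
Proof.
move=> yfix y'fix.
suff rank_ind m j : (r j < m)%N ->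
    (forall j', (r j' <= r j)%N -> x j' = x' j') -> y j = y' j.
  by move=> j; apply: rank_ind (ltnSn _).
elim: m j => [//|m IHm] j jm xx'; rewrite yfix y'fix /embed_step.
rewrite (@fiber_words_agree j y y') ?xx' // => j' j'j k kN.
by rewrite (IHm j') // => [|j'' j''j']; [lia | apply: xx'; lia].
Qed.

Lemma embed_triangular : rank_triangular embed.
Proof. move=> x x'; exact: embed_step_fix_triangular (embed_fix x) (embed_fix x'). Qed.

Lemma embed_step_fix_unique x y : y = embed_step x y -> y = embed x.
Proof.
move=> yfix; apply: funext => j.
exact: embed_step_fix_triangular yfix (embed_fix x) _ _.
Qed.

Lemma fiber_words_gt0 j z y :
  U z -> agree_below (r j) z y -> (0 < size (fiber_words j y))%N.
Proof.
move=> Uz zy; have : init_word N (z j) \in fiber_words j y.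
  by apply/fiber_wordsP; exists z.
by case: (fiber_words j y).
Qed.

Lemma embed_admissible x k : exists2 z, U z & agree_below k z (embed x).
Proof.
elim: k => [|k [z Uz zx]]; first by have [z0 Uz0] := U_neq0; exists z0.
have [[j rj]|no_rank_k] := pselect (exists j, r j = k); last first.
  exists z => // j' j'k; apply: zx; suff : r j' <> k by lia.
  by move=> rj'; apply: no_rank_k; exists j'.
have zx_j : agree_below (r j) z (embed x) by rewrite rj.
have := init_word_cylmap_mem (x j) (fiber_words_gt0 Uz zx_j).
rewrite -embedE.
case/fiber_wordsP=> z' [Uz' z'x z'j]; exists z' => // j' j'k b bN.
have [j'k'|] := ltnP (r j') k; first by apply: z'x; lia.
move=> kj'; have -> : j' = j by apply: r_inj; lia.
exact: bits_of_init_word_eq z'j b bN.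
Qed.

Lemma embed_in x : U (embed x).
Proof.
have [z Uz zx] := embed_admissible x n.
by apply: U_depth Uz => j k kN; exact: zx.
Qed.

Lemma embedK : cancel embed embed_inv.
Proof.
move=> x; apply: funext => j; have [z Uz zx] := embed_admissible x (r j).
by rewrite /embed_inv embedE cylmapK ?fiber_words_uniq //; exact: fiber_words_gt0 zx.
Qed.

Lemma embed_invK y : U y -> embed (embed_inv y) = y.
Proof.
move=> Uy; apply/esym/embed_step_fix_unique/funext => j.
rewrite /embed_step /embed_inv cylmap_invK ?fiber_words_uniq //.
by apply/fiber_wordsP; exists y.
Qed.

Lemma embed_inv_triangular : rank_triangular embed_inv.
Proof.
move=> y y' j yy'; rewrite /embed_inv yy' // (@fiber_words_agree j y y') //.
by move=> j' j'j k kN; rewrite yy' //; lia.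
Qed.

Lemma embed_agree_upto M x x' : (N <= M)%N ->
  agree_upto (M + #|{: word}|) x x' -> agree_upto M (embed x) (embed x').
Proof.
move=> NM xx'.
suff rank_ind m j : (r j < m)%N -> forall b, (b < M)%N -> embed x j b = embed x' j b.
  by move=> j; apply: rank_ind (ltnSn _).
elim: m j => [//|m IHm] j jm b bM; rewrite !embedE.
rewrite (@fiber_words_agree j (embed x) (embed x')) => [|j' j'j k kN]; last first.
  by apply: IHm; lia.
apply: cylmap_local => k' k'b; apply: xx'.
by have := size_fiber_words j (embed x'); lia.
Qed.

Lemma embed_inv_agree_upto M y y' :
  agree_upto (M + N) y y' -> agree_upto M (embed_inv y) (embed_inv y').
Proof.
move=> yy' j b bM; rewrite /embed_inv (@fiber_words_agree j y y').
  by apply: cylmap_inv_local => k' k'b; apply: yy'; lia.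
by move=> j' _ k kN; apply: yy'; lia.
Qed.

Lemma range_embed : range embed = U.
Proof.
apply/seteqP; split=> [_ [x _ <-]|y Uy]; first exact: embed_in.
by exists (embed_inv y); rewrite ?embed_invK.
Qed.

Lemma embed_continuous : continuous embed.
Proof.
apply: (continuous_of_agree_upto finite_ranked) => M.
exists (maxn M N + #|{: word}|) => x x' xx'.
apply: (@agree_upto_le _ (maxn M N)); first exact: leq_maxl.
exact: embed_agree_upto (leq_maxr _ _) xx'.
Qed.

Lemma embed_inv_continuous : continuous embed_inv.
Proof.
apply: (continuous_of_agree_upto finite_ranked) => M.
by exists (M + N); exact: embed_inv_agree_upto.
Qed.

End Embedding.
End RankedCoordinates.

Lemma rel_clopen_preimage (S T : topologicalType) (H : S -> T) (Y : set T) :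
  continuous H -> rel_clopen (range H) Y -> open (H @^-1` Y) /\ closed (H @^-1` Y).
Proof.
have preimageE A : H @^-1` (range H `&` A) = H @^-1` A.
  by rewrite preimage_setI preimage_range setTI.
move=> Hc [[V [oV YV]] [F [cF YF]]]; split.
  by rewrite YV preimageE; apply: open_comp oV => x _; exact: Hc.
by rewrite YF preimageE; apply: preimage_closed cF => x _; exact: Hc.
Qed.

Section AgreementPreserving.
Variables (Omega : Type) (zeta : set (Tseq Omega)).

Definition preserves_agree (f : Dpow zeta -> Dpow zeta) :=
  forall xi, Xi xi -> xi `<=` zeta ->
    forall x0 x1, agree_on xi x0 x1 -> agree_on xi (f x0) (f x1).

Lemma IPS_comp (X Y : set (Dpow zeta)) (H K Kinv : Dpow zeta -> Dpow zeta) :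
  homeo_onto H X ->
  (forall x0 x1 xi, Xi xi -> xi `<=` zeta ->
     (agree_on xi x0 x1 <-> agree_on xi (H x0) (H x1))) ->
  Y `<=` X -> continuous K -> continuous Kinv -> cancel K Kinv ->
  range K = H @^-1` Y -> preserves_agree K -> preserves_agree Kinv -> IPS Y.
Proof.
move=> [Hc HX _ [G [Gc GK]]] Hagree YX Kc Kinvc KK KY Kagree Kinvagree.
exists (H \o K); split; first split.
- by move=> x; apply: continuous_comp; [exact: Kc | exact: Hc].
- apply/seteqP; split=> [_ [x _ <-]|y Yy].
    by have : (H @^-1` Y) (K x) by rewrite -KY; exists x.
  have [x _ Hx] : range H y by rewrite HX; exact: YX.
  have [x' _ Kx'] : range K x by rewrite KY /preimage /= Hx.
  by exists x' => //=; rewrite Kx'.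
- by move=> x0 x1 /(congr1 (Kinv \o G)) /=; rewrite !GK !KK.
- exists (Kinv \o G); split=> [y|x /=]; last by rewrite GK KK.
  exact: (continuous_comp ((continuous_subspaceW YX Gc) y) (Kinvc (G y))).
move=> x0 x1 xi Xxi xizeta; rewrite -Hagree //; split; first exact: Kagree.
by rewrite -{2}(KK x0) -{2}(KK x1); exact: Kinvagree.
Qed.

End AgreementPreserving.

Section InitialSegments.
Variables (Omega : Type) (i : Tseq Omega).

Definition below_rank (j : {j | below i j}) : nat := size (sval (sval j)).

Lemma below_take j : sval (sval j) = take (below_rank j) (sval i).
Proof. by case: j => j [k ik]; rewrite /below_rank /= ik take_size_cat. Qed.

Lemma below_rank_inj : injective below_rank.
Proof.
move=> j j' jj'; have : sval (sval j) = sval (sval j') by rewrite !below_take jj'.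
by case: j j' {jj'} => [[s ps] qs] [[s' ps'] qs'] /= ss'; do 2 apply: eq_exist.
Qed.

Lemma below_rank_lt j : (below_rank j < (size (sval i)).+1)%N.
Proof. by rewrite ltnS /below_rank below_take size_take geq_minr. Qed.

Lemma Xi_below_rank xi j j' : Xi xi ->
  (below_rank j' <= below_rank j)%N -> xi (sval j) -> xi (sval j').
Proof.
move=> [_ xi_down]; rewrite leq_eqVlt => /orP[/eqP/below_rank_inj -> //|j'j xij].
apply: xi_down xij; exists (drop (below_rank j') (sval (sval j))); split.
  by move=> /(congr1 size) /=; rewrite size_drop; move: j'j; rewrite /below_rank; lia.
by rewrite (below_take j') -(take_takel _ (ltnW j'j)) -below_take cat_take_drop.
Qed.

Lemma rank_triangular_preserves_agree f :
  rank_triangular below_rank f -> preserves_agree (zeta := below i) f.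
Proof.
move=> f_tri xi Xxi _ x0 x1 x01 j ij xij; apply: f_tri => -[j' ij'] j'j.
by apply: x01; exact: (Xi_below_rank Xxi j'j xij).
Qed.

End InitialSegments.

Theorem lemma2p17 (Omega : Type) (i : Tseq Omega)
    (X : set (Dpow (below i))) (Y : set (Dpow (below i))) :
  IPS X -> Y !=set0 -> Y `<=` X -> rel_clopen X Y -> IPS Y.
Proof.
move=> [H [Hhomeo Hagree]] [y Yy] YX XY; have [Hc HX _ _] := Hhomeo.
pose U := H @^-1` Y.
have [U_open U_closed] : open U /\ closed U by apply: rel_clopen_preimage; rewrite ?HX.
have U_neq0 : U !=set0.
  have [x _ Hx] : range H y by rewrite HX; exact: YX.
  by exists x; rewrite /U /= Hx.
have r_inj := @below_rank_inj _ i; have r_lt := @below_rank_lt _ i.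
have [N U_depth] := clopen_agree_upto (finite_ranked r_inj r_lt) U_open U_closed.
apply: (IPS_comp (Kinv := embed_inv (@below_rank _ i) N U) Hhomeo Hagree YX _ _ _
         (range_embed r_inj r_lt U_depth U_neq0)).
- exact: (embed_continuous r_inj r_lt).
- exact: (embed_inv_continuous r_inj r_lt).
- exact: (embedK r_inj r_lt _ U_neq0).
- exact/rank_triangular_preserves_agree/embed_triangular.
- exact/rank_triangular_preserves_agree/embed_inv_triangular.
Qed.
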